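(* Let $K$ be a field of characteristic $0$, $d\geq 2$ an integer, $m$ an integer with $\gcd(m,d)=1$, $r:=m/d$, and $E\geq 2$ an integer. Let $V_{r,E}(x):=\sum_{k=0}^{E-1}\binom{r}{k}x^k\in K[x]$, where $\binom{r}{k}=\frac{r(r-1)\cdots(r-k+1)}{k!}$. Suppose $m>d(E-1)$. Then the polynomial $F(x)=(1+x)^m-V_{r,E}(x)^d$ has degree $m$, has no nonzero repeated roots (in an algebraic closure of $K$), and has $0$ as a root of multiplicity exactly $E$. Equivalently, $f(x):=F(x)/x^E$ is a polynomial of positive degree $m-E$ without repeated roots and with nonzero constant term. *)

From HB Require Import structures.
From mathcomp Require Import all_boot all_order all_algebra.
Set Implicit Arguments. Unset Strict Implicit. Unset Printing Implicit Defensive.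
Import Order.TTheory GRing.Theory Num.Theory.
Local Open Scope ring_scope.

Definition gbinom (K : fieldType) (r : K) (k : nat) : K :=
  (\prod_(i < k) (r - i%:R)) / (k`!)%:R.

Definition Vpoly (K : fieldType) (r : K) (E : nat) : {poly K} :=
  \sum_(k < E) (gbinom r k) *: 'X^k.

Definition Fpoly (K : fieldType) (m d E : nat) : {poly K} :=
  (1 + 'X) ^+ m - (Vpoly (m%:R / d%:R) E) ^+ d.

From HB Require Import structures.
From mathcomp Require Import all_boot all_order all_algebra.
From mathcomp Require Import ring.
Set Implicit Arguments. Unset Strict Implicit. Unset Printing Implicit Defensive.
Import Order.TTheory GRing.Theory Num.Theory.
Local Open Scope ring_scope.

(* Put r = m/d and V = V_{r,E}, the truncation of the binomial series of (1+x)^r.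
   Then (1+x)V' = rV - c x^(E-1) with c = E binom(r,E), and c <> 0 because r is not an
   integer; as dr = m, F = (1+x)^m - V^d satisfies (1+x)F' - mF = dc x^(E-1) V^(d-1).
   At a common root z <> 0 of F and F' this forces V(z) = 0, so (1+z)^m = 0 and z = -1,
   whereas at x = -1 the equation for V reads rV(-1) = c(-1)^(E-1) <> 0.  Comparing
   coefficients in the equation for F, starting from F(0) = 0, the coefficients of x^k
   vanish for k < E and E F_E = dc <> 0.  The degree is m since deg V^d <= d(E-1) < m. *)

Section CommutativeRing.
Variable R : comNzRingType.
Implicit Types (F V P : {poly R}) (a r : R).

Lemma deriv_exp_1addX m :
  (1 + 'X) * ((1 + 'X) ^+ m)^`() = m%:R * (1 + 'X : {poly R}) ^+ m.
Proof.
rewrite deriv_exp derivD derivC derivX add0r mul1r.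
by case: m => [|m]; rewrite ?mulr0n ?mulr0 ?mul0r // mulrnAr -exprS mulr_natl.
Qed.

Lemma ode_sub_exp V P r (m d : nat) :
  d.+1%:R * r = m%:R -> (1 + 'X) * V^`() = r%:P * V - P ->
  (1 + 'X) * ((1 + 'X) ^+ m - V ^+ d.+1)^`() - m%:R%:P * ((1 + 'X) ^+ m - V ^+ d.+1)
    = d.+1%:R * P * V ^+ d.
Proof.
move=> dr_m V_ode; rewrite derivB mulrBr deriv_exp_1addX deriv_exp /=.
have -> : (1 + 'X) * (V^`() * V ^+ d *+ d.+1) = d.+1%:R * ((1 + 'X) * V^`()) * V ^+ d.
  by ring.
have m_dr : m%:R = (d.+1%:R * r)%:P :> {poly R} by rewrite dr_m polyC_natr.
rewrite V_ode polyC_natr m_dr polyCM polyC_natr exprS; ring.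
Qed.

Lemma ode_hornerN1_neq0 V P r :
  (1 + 'X) * V^`() = r%:P * V - P -> P.[-1] != 0 -> V.[-1] != 0.
Proof.
move=> V_ode; apply: contra => /eqP V_N1.
have := congr1 (horner^~ (-1)) V_ode.
by rewrite !hornerE V_N1 addrN mul0r mulr0 sub0r => /esym/eqP; rewrite oppr_eq0.
Qed.

Lemma coef_ode F a k :
  ((1 + 'X) * F^`() - a%:P * F)`_k = F`_k.+1 *+ k.+1 + F`_k *+ k - a * F`_k.
Proof.
by rewrite mulrDl mul1r coefB coefD coefXM coefCM !coef_deriv; case: k.
Qed.

Lemma size_exp_1addX m : size ((1 + 'X : {poly R}) ^+ m) = m.+1.
Proof.
have -> : 1 + 'X = 'X - (-1)%:P :> {poly R} by rewrite polyCN opprK polyC1 addrC.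
exact: size_exp_XsubC.
Qed.

End CommutativeRing.

Lemma ode_sub_exp_root (R : idomainType) (F V Q : {poly R}) (a z : R) (m d : nat) :
  F = (1 + 'X) ^+ m - V ^+ d.+1 -> (1 + 'X) * F^`() - a%:P * F = Q * V ^+ d ->
  ~~ root V (-1) -> ~~ root Q z -> root F z -> ~~ root F^`() z.
Proof.
rewrite /root => F_def F_ode V_N1 /negbTE Qz Fz; apply: contra V_N1 => F'z.
have /eqP := congr1 (horner^~ z) F_ode.
rewrite !hornerE (eqP Fz) (eqP F'z) !mulr0 subr0 eq_sym mulf_eq0 Qz /=.
rewrite expf_eq0 => /andP[_ Vz].
move: Fz; rewrite F_def !hornerE (eqP Vz) expr0n subr0 expf_eq0 addr_eq0.
by case/andP => _ /eqP one_Nz; rewrite one_Nz opprK.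
Qed.

Lemma mup0_coef (K : fieldType) (F : {poly K}) n :
  (forall i, (i < n)%N -> F`_i = 0) -> F`_n != 0 -> mup 0 F = n.
Proof.
move=> F_low Fn_neq0.
have take0 : take_poly n F = 0.
  by apply/polyP => i; rewrite coef_take_poly coef0; case: ltnP => // /F_low.
have drop0 : ~~ root (drop_poly n F) 0 by rewrite /root horner_coef0 coef_drop_poly.
rewrite -(poly_take_drop n F) take0 add0r mupMr //.
have -> : 'X^n = ('X - 0%:P) ^+ n :> {poly K} by rewrite polyC0 subr0.
by rewrite mup_XsubCX eqxx.
Qed.

Lemma map_ode_sub_exp_root (K : fieldType) (L : idomainType) (iota : {rmorphism K -> L})
    (F V : {poly K}) (a w : K) (m d e : nat) (z : L) :
  F = (1 + 'X) ^+ m - V ^+ d.+1 -> (1 + 'X) * F^`() - a%:P * F = 'X^e * (w%:P * V ^+ d) ->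
  w != 0 -> V.[-1] != 0 -> z != 0 ->
  root (map_poly iota F) z -> ~~ root (map_poly iota F)^`() z.
Proof.
move=> F_def F_ode w_neq0 V_N1 z_neq0.
have map_1addX : map_poly iota (1 + 'X) = 1 + 'X by rewrite rmorphD rmorph1 /= map_polyX.
apply: (@ode_sub_exp_root _ _ (map_poly iota V) ('X^e * (iota w)%:P) (iota a) z m d).
- by rewrite F_def rmorphB !rmorphXn /= map_1addX.
- have := congr1 (map_poly iota) F_ode.
  by rewrite rmorphB !rmorphM !rmorphXn /= map_1addX map_polyX deriv_map !map_polyC mulrA.
- by rewrite /root -(rmorphN1 iota) horner_map fmorph_eq0.
- by rewrite /root !hornerE mulf_neq0 ?fmorph_eq0 ?expf_neq0.
Qed.

Section CharacteristicZero.
Variable K : fieldType.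
Hypothesis K0 : [pchar K] =i pred0.
Implicit Types (F G : {poly K}) (a r : K).

Let natf_eq0 n : (n%:R == 0 :> K) = (n == 0)%N := (pcharf0P K).1 K0 n.

Lemma pchar0_natr_inj : injective (fun n : nat => n%:R : K).
Proof.
move=> a b /= eq_ab.
wlog le_ab : a b eq_ab / (a <= b)%N.
  by move=> W; case: (leqP a b) => [|/ltnW] le; [exact: W | exact/esym/W].
by apply/eqP; rewrite eqn_leq le_ab -subn_eq0 -natf_eq0 natrB // eq_ab subrr eqxx.
Qed.

Lemma ratio_coprime_neq_nat m d i :
  coprime m d -> (1 < d)%N -> m%:R / d%:R != i%:R :> K.
Proof.
move=> co_md d_gt1; apply/eqP => r_nat.
have m_id : m = (i * d)%N.
  by apply: pchar0_natr_inj; rewrite /= natrM -r_nat divfK // natf_eq0 -lt0n ltnW.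
move: co_md; rewrite m_id coprimeMl /coprime gcdnn => /andP[_ /eqP d1].
by rewrite d1 in d_gt1.
Qed.

Lemma gbinom0 r : gbinom r 0 = 1.
Proof. by rewrite /gbinom big_ord0 fact0 divr1. Qed.

Lemma gbinomS r k : k.+1%:R * gbinom r k.+1 = (r - k%:R) * gbinom r k.
Proof.
rewrite /gbinom big_ord_recr factS natrM /=.
have kf_neq0 : k`!%:R != 0 :> K by rewrite natf_eq0 -lt0n fact_gt0.
by field; rewrite kf_neq0 addrC natr1 natf_eq0.
Qed.

Lemma gbinom_neq0 r k : (forall i : nat, r != i%:R) -> gbinom r k != 0.
Proof.
move=> r_nnat; rewrite /gbinom mulf_neq0 ?invr_eq0 ?natf_eq0 -?lt0n ?fact_gt0 //.
by apply/prodf_neq0 => i _; rewrite subr_eq0.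
Qed.

Lemma VpolyE r n : Vpoly r n = \poly_(k < n) gbinom r k.
Proof. by rewrite poly_def. Qed.

Lemma VpolyS r n : Vpoly r n.+1 = Vpoly r n + (gbinom r n)%:P * 'X^n.
Proof. by rewrite /Vpoly big_ord_recr /= mul_polyC. Qed.

Lemma Vpoly_ode r n :
  (1 + 'X) * (Vpoly r n.+1)^`() = r%:P * Vpoly r n.+1 - (n.+1%:R * gbinom r n.+1)%:P * 'X^n.
Proof.
elim: n => [|n IH].
  rewrite VpolyS /Vpoly big_ord0 add0r gbinom0 mulr1 derivC mulr0.
  by rewrite gbinomS gbinom0 subr0 mulr1 subrr.
rewrite VpolyS derivD derivM derivC mul0r add0r derivXn /= mulrDr IH (gbinomS r n.+1).
move: (gbinom r n.+1) => b; rewrite !polyCM polyCB !polyC_natr exprS; ring.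
Qed.

Lemma Vpoly_horner0 r n : (Vpoly r n.+1).[0] = 1.
Proof. by rewrite VpolyE horner_coef0 coef_poly gbinom0. Qed.

Lemma size_Vpoly r n : (size (Vpoly r n) <= n)%N.
Proof. by rewrite VpolyE size_poly. Qed.

Lemma Fpoly_horner0 m d e : (Fpoly K m d e.+1).[0] = 0.
Proof. by rewrite /Fpoly !hornerE Vpoly_horner0 !expr1n subrr. Qed.

Lemma size_Fpoly m d E : (d * (E - 1) < m)%N -> size (Fpoly K m d E) = m.+1.
Proof.
move=> dE_lt_m; rewrite /Fpoly size_polyDl ?size_polyN size_exp_1addX //.
apply: leq_ltn_trans (size_poly_exp_leq _ _) _.
have := leq_mul (leq_sub2r 1 (size_Vpoly (m%:R / d%:R) E)) (leqnn d).
by rewrite subn1 => le_sV; rewrite ltnS (leq_ltn_trans le_sV) // mulnC.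
Qed.

Lemma mup0_ode F G a e :
  F.[0] = 0 -> (1 + 'X) * F^`() - a%:P * F = 'X^e * G -> G.[0] != 0 -> mup 0 F = e.+1.
Proof.
move=> F0 F_ode G0.
have coefF k : F`_k.+1 *+ k.+1 + F`_k *+ k - a * F`_k = ('X^e * G)`_k.
  by rewrite -F_ode coef_ode.
have F_low k : (k <= e)%N -> F`_k = 0.
  elim: k => [_|k IH lt_ke]; first by rewrite -horner_coef0.
  move: (coefF k); rewrite coefXnM lt_ke IH 1?ltnW // mul0rn mulr0 subr0 addr0.
  by move/eqP; rewrite -mulr_natr mulf_eq0 natf_eq0 orbF => /eqP.
apply: mup0_coef => [i|]; first by rewrite ltnS; apply: F_low.
move: (coefF e); rewrite coefXnM ltnn subnn -horner_coef0 (F_low e) //.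
rewrite mul0rn mulr0 !addr0 subr0 => Fe.
by apply: contra G0 => /eqP Fe0; rewrite -Fe Fe0 mul0rn.
Qed.

End CharacteristicZero.

Theorem theorem7p1 (K : fieldType) (d m E : nat)
  (hchar : [pchar K] =i pred0)
  (hd : (2 <= d)%N) (hmd : coprime m d) (hE : (2 <= E)%N)
  (hm : (d * (E - 1) < m)%N) :
  (size (Fpoly K m d E)).-1 = m
  /\ (forall (L : closedFieldType) (iota : {rmorphism K -> L}) (z : L),
        z != 0 -> root (map_poly iota (Fpoly K m d E)) z ->
        ~~ root (map_poly iota (Fpoly K m d E))^`() z)
  /\ mup 0 (Fpoly K m d E) = E.
Proof.
have natf_eq0 := (pcharf0P K).1 hchar.
case: d hd hmd hm => [|d] // hd hmd hm; case: E hE hm => [|e] // hE hm.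
set r : K := m%:R / d.+1%:R; set V := Vpoly r e.+1.
set c := e.+1%:R * gbinom r e.+1.
have c_neq0 : c != 0.
  by rewrite mulf_neq0 ?natf_eq0 ?gbinom_neq0 // => i; apply: ratio_coprime_neq_nat.
have V_ode : (1 + 'X) * V^`() = r%:P * V - c%:P * 'X^e := Vpoly_ode hchar r e.
clearbody c.
have F_ode : (1 + 'X) * (Fpoly K m d.+1 e.+1)^`() - m%:R%:P * Fpoly K m d.+1 e.+1
    = 'X^e * ((d.+1%:R * c)%:P * V ^+ d).
  have dr_m : d.+1%:R * r = m%:R by rewrite /r mulrCA mulfV ?mulr1 // natf_eq0.
  by rewrite (ode_sub_exp dr_m V_ode) polyCM polyC_natr; ring.
split; first by rewrite size_Fpoly.
split=> [L iota z|].
  apply: (map_ode_sub_exp_root (erefl _) F_ode); first by rewrite mulf_neq0 ?natf_eq0.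
  by apply: (ode_hornerN1_neq0 V_ode); rewrite !hornerE mulf_neq0 ?signr_eq0.
apply: (mup0_ode hchar (Fpoly_horner0 _ _ _ _) F_ode).
by rewrite !hornerE Vpoly_horner0 expr1n mulr1 mulf_neq0 ?natf_eq0.
Qed.
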